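(* Let $a<b$, $c<d$, $C\in\mathbb{R}\setminus\{0\}$, $\Delta=\max\{b-a,d-c\}$, and let $\gamma\ge1$ be an integer. For a pair of real sequences $(p,q)=((p_n)_{n\ge0},(q_n)_{n\ge0})$ define $$\|(p,q)\|_\gamma=\max\Big\{\sup_{n\ge0}\Big|\frac{(n!)^2p_n}{(\gamma|C|\Delta)^n}\Big|,\ \sup_{n\ge0}\Big|\frac{(n!)^2q_n}{(\gamma|C|\Delta)^n}\Big|\Big\}.$$ Define $\Lambda(p,q)=(\tilde p,\tilde q)$ by $$\tilde p_n=\sum_{k=0}^{n}p_k\frac{(C(d-c))^{n-k}k!}{(n-k)!\,n!}+\sum_{k=1}^{\infty}q_k\frac{C^n(d-c)^{n+k}k!}{(n+k)!\,n!},\qquad \tilde q_n=\sum_{k=0}^{n}q_k\frac{(C(b-a))^{n-k}k!}{(n-k)!\,n!}+\sum_{k=1}^{\infty}p_k\frac{C^n(b-a)^{n+k}k!}{(n+k)!\,n!}.$$ Then $\Lambda$, viewed as a linear map from the space of pairs of sequences with finite $\|\cdot\|_\gamma$ to the space of pairs with finite $\|\cdot\|_{\gamma+1}$, is bounded, with operator norm at most $I_0(2\sqrt{\gamma|C|}\,\Delta)$; that is, $\|\Lambda(p,q)\|_{\gamma+1}\le I_0(2\sqrt{\gamma|C|}\,\Delta)\,\|(p,q)\|_\gamma$ whenever $\|(p,q)\|_\gamma<\infty$.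
   Context: $I_0$ is the zero-order modified Bessel function of the first kind, $I_0(2z)=\sum_{k\ge0}z^{2k}/(k!)^2$. The map $\Lambda$ sends the power-series coefficients of the boundary data $k(\cdot,c)$, $k(a,\cdot)$ of the Goursat problem $\partial^2k/\partial s\partial t=Ck$ on $[a,b]\times[c,d]$ to those of $k(\cdot,d)$, $k(b,\cdot)$. *)

From Stdlib Require Import Reals Arith.
From Coquelicot Require Import Coquelicot.
Open Scope R_scope.

Definition I0 (x : R) : R :=
  Series (fun k => (x / 2) ^ (2 * k) / (INR (fact k)) ^ 2).

Definition Rbar_maxr (x y : Rbar) : Rbar :=
  if Rbar_le_dec x y then y else x.

Definition wsup (r : R) (s : nat -> R) : Rbar :=
  Lub_Rbar (fun x => exists n : nat,
    x = Rabs ((INR (fact n)) ^ 2 * s n / r ^ n)).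

Definition gnorm (gamma : nat) (C Delta : R) (p q : nat -> R) : Rbar :=
  Rbar_maxr (wsup (INR gamma * Rabs C * Delta) p)
            (wsup (INR gamma * Rabs C * Delta) q).

Definition Lam_comp (C L : R) (u v : nat -> R) (n : nat) : R :=
  sum_f_R0 (fun k => u k * (C * L) ^ (n - k) * INR (fact k)
                      / (INR (fact (n - k)) * INR (fact n))) n
  + Series (fun j => let k := S j in
      v k * C ^ n * L ^ (n + k) * INR (fact k)
        / (INR (fact (n + k)) * INR (fact n))).

Definition Lam_p (C c d : R) (p q : nat -> R) : nat -> R := Lam_comp C (d - c) p q.
Definition Lam_q (C a b : R) (p q : nat -> R) : nat -> R := Lam_comp C (b - a) q p.

From Stdlib Require Import Reals Arith Lia Lra.
From Coquelicot Require Import Coquelicot.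
Open Scope R_scope.

(* With r = gamma |C| Delta and t = gamma |C| Delta^2, suppose |p_k|, |q_k| <= M r^k / (k!)^2.
   By the binomial theorem the finite sum in Lambda is at most
   M ((gamma + 1) |C| Delta)^n / (n!)^2, and since (n + k)! >= n! k! the k-th term of the
   series is at most M ((gamma + 1) |C| Delta)^n / (n!)^2 * t^k / (k!)^2.  Adding up, the
   weighted coefficients of Lambda (p, q) at radius (gamma + 1) |C| Delta are bounded by
   M * sum_k t^k / (k!)^2 = M I_0(2 sqrt t). *)

Definition bessel_term (r : R) (n : nat) : R := r ^ n / INR (fact n) ^ 2.

Definition dominated (M r : R) (s : nat -> R) : Prop :=
  forall n, Rabs (s n) <= M * bessel_term r n.

Lemma fact_mul_le_fact_add (n k : nat) : (fact n * fact k <= fact (n + k))%nat.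
Proof.
  induction k as [|k IHk].
  - rewrite Nat.add_0_r; simpl; lia.
  - rewrite Nat.add_succ_r; simpl (fact (S _)).
    pose proof (lt_O_fact n); nia.
Qed.

Lemma bessel_term_0 (r : R) : bessel_term r 0 = 1.
Proof. unfold bessel_term; simpl; field. Qed.

Lemma bessel_term_ge0 (r : R) (n : nat) : 0 <= r -> 0 <= bessel_term r n.
Proof.
  intros Hr; pose proof (INR_fact_lt_0 n).
  apply Rdiv_le_0_compat; [now apply pow_le | nra].
Qed.

Lemma bessel_term_mul_l (a r : R) (n : nat) :
  bessel_term (a * r) n = a ^ n * bessel_term r n.
Proof. unfold bessel_term, Rdiv; rewrite Rpow_mult_distr; ring. Qed.

Lemma bessel_term_le_mul_l (a r : R) (n : nat) :
  1 <= a -> 0 <= r -> bessel_term r n <= bessel_term (a * r) n.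
Proof.
  intros Ha Hr; rewrite bessel_term_mul_l, <- (Rmult_1_l (bessel_term r n)) at 1.
  apply Rmult_le_compat_r; [now apply bessel_term_ge0 | now apply pow_R1_Rle].
Qed.

Lemma ex_series_bessel_term (t : R) : 0 <= t -> ex_series (bessel_term t).
Proof.
  intros Ht.
  assert (Hexp : ex_series (fun k => t ^ k / INR (fact k))).
  { exists (exp t); eapply is_series_ext; [|exact (is_exp_Reals t)].
    intros k; now rewrite pow_n_pow. }
  apply (ex_series_le (V := R_CompleteNormedModule)) with (2 := Hexp); intros k.
  change (norm (bessel_term t k)) with (Rabs (bessel_term t k)).
  rewrite Rabs_pos_eq by now apply bessel_term_ge0.
  assert (1 <= INR (fact k)) by (apply (le_INR 1), lt_O_fact).
  unfold bessel_term, Rdiv; apply Rmult_le_compat_l; [now apply pow_le|].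
  apply Rinv_le_contravar; nra.
Qed.

Lemma I0_bessel_term (x : R) : I0 (2 * x) = Series (bessel_term (x ^ 2)).
Proof.
  unfold I0, bessel_term; apply Series_ext; intros k.
  rewrite pow_mult; do 3 f_equal; field.
Qed.

Lemma Rabs_Series_le (f h : nat -> R) :
  (forall n, Rabs (f n) <= h n) -> ex_series h -> Rabs (Series f) <= Series h.
Proof.
  intros Hfh Hh.
  assert (Habs : ex_series (fun n => Rabs (f n))).
  { apply (ex_series_le (V := R_CompleteNormedModule)) with (2 := Hh); intros n.
    change (norm (Rabs (f n))) with (Rabs (Rabs (f n))); now rewrite Rabs_Rabsolu. }
  eapply Rle_trans; [now apply Series_Rabs|].
  apply Series_le; [|exact Hh]; intros n; split; [apply Rabs_pos | apply Hfh].
Qed.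

Lemma dominated_nonneg (M r : R) (s : nat -> R) : dominated M r s -> 0 <= M.
Proof.
  intros Hs; specialize (Hs 0%nat); rewrite bessel_term_0, Rmult_1_r in Hs.
  exact (Rle_trans _ _ _ (Rabs_pos _) Hs).
Qed.

Lemma Rabs_weighted_le (r M x : R) (n : nat) : 0 < r ->
  Rabs (INR (fact n) ^ 2 * x / r ^ n) <= M <-> Rabs x <= M * bessel_term r n.
Proof.
  intros Hr; pose proof (INR_fact_lt_0 n); pose proof (pow_lt r n Hr).
  assert (Hw : 0 < INR (fact n) ^ 2 / r ^ n) by (apply Rdiv_lt_0_compat; nra).
  replace (INR (fact n) ^ 2 * x / r ^ n) with (INR (fact n) ^ 2 / r ^ n * x) by (field; lra).
  rewrite Rabs_mult, (Rabs_pos_eq _ (Rlt_le _ _ Hw)).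
  replace (M * bessel_term r n) with (M / (INR (fact n) ^ 2 / r ^ n))
    by (unfold bessel_term; field; lra).
  rewrite Rmult_comm; now apply Rle_div_r.
Qed.

Lemma wsup_le_dominated (r M : R) (s : nat -> R) : 0 < r ->
  Rbar_le (wsup r s) (Finite M) <-> dominated M r s.
Proof.
  intros Hr; unfold wsup, dominated.
  destruct (Lub_Rbar_correct (fun x => exists n : nat,
    x = Rabs (INR (fact n) ^ 2 * s n / r ^ n))) as [Hub Hlub].
  split.
  - intros Hle n; apply Rabs_weighted_le; [exact Hr|].
    exact (Rbar_le_trans _ _ _ (Hub _ (ex_intro _ n eq_refl)) Hle).
  - intros Hs; apply Hlub; intros x [n ->]; now apply Rabs_weighted_le.
Qed.

Lemma Rbar_maxr_le (x y z : Rbar) :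
  Rbar_le (Rbar_maxr x y) z <-> Rbar_le x z /\ Rbar_le y z.
Proof.
  unfold Rbar_maxr; destruct (Rbar_le_dec x y) as [Hxy|Hyx]; split.
  - intros Hy; split; [exact (Rbar_le_trans _ _ _ Hxy Hy) | exact Hy].
  - now intros [_ Hy].
  - intros Hx; split; [exact Hx|].
    exact (Rbar_le_trans _ _ _ (Rbar_lt_le _ _ (Rbar_not_le_lt _ _ Hyx)) Hx).
  - now intros [Hx _].
Qed.

Lemma gnorm_le_dominated (gamma : nat) (C D M : R) (p q : nat -> R) :
  0 < INR gamma * Rabs C * D ->
  Rbar_le (gnorm gamma C D p q) (Finite M) <->
  dominated M (INR gamma * Rabs C * D) p /\ dominated M (INR gamma * Rabs C * D) q.
Proof.
  intros Hr; unfold gnorm; rewrite Rbar_maxr_le, !wsup_le_dominated by exact Hr.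
  reflexivity.
Qed.

Lemma Rabs_pow_le (x y : R) (m : nat) : Rabs x <= y -> Rabs (x ^ m) <= y ^ m.
Proof.
  intros Hxy; rewrite <- RPow_abs; apply pow_incr; split; [apply Rabs_pos | exact Hxy].
Qed.

Section LambdaBound.

Variables (C L D g M : R) (u v : nat -> R).
Hypotheses (HL : 0 < L <= D) (Hg : 0 <= g).
Hypotheses (Hu : dominated M (g * Rabs C * D) u) (Hv : dominated M (g * Rabs C * D) v).

Let HCL : Rabs (C * L) <= Rabs C * D.
Proof.
  rewrite Rabs_mult, (Rabs_pos_eq L) by lra.
  apply Rmult_le_compat_l; [apply Rabs_pos | lra].
Qed.

Lemma Lam_head_term_le (n k : nat) : (k <= n)%nat ->
  Rabs (u k * (C * L) ^ (n - k) * INR (fact k) / (INR (fact (n - k)) * INR (fact n)))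
  <= Binomial.C n k * g ^ k * 1 ^ (n - k) * (M * bessel_term (Rabs C * D) n).
Proof.
  intros Hk.
  pose proof (INR_fact_lt_0 k); pose proof (INR_fact_lt_0 (n - k)).
  pose proof (INR_fact_lt_0 n).
  set (c := INR (fact k) / (INR (fact (n - k)) * INR (fact n))).
  assert (Hc : 0 < c) by (apply Rdiv_lt_0_compat; nra).
  replace (u k * (C * L) ^ (n - k) * INR (fact k) / (INR (fact (n - k)) * INR (fact n)))
    with (u k * (C * L) ^ (n - k) * c) by (unfold c, Rdiv; ring).
  rewrite !Rabs_mult, (Rabs_pos_eq c) by lra.
  eapply Rle_trans.
  { apply Rmult_le_compat_r; [lra|].
    apply Rmult_le_compat; try apply Rabs_pos; [apply Hu | exact (Rabs_pow_le _ _ _ HCL)]. }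
  right.
  replace (g * Rabs C * D) with (g * (Rabs C * D)) by ring.
  rewrite bessel_term_mul_l.
  unfold bessel_term, c, Binomial.C; rewrite pow1.
  replace ((Rabs C * D) ^ n) with ((Rabs C * D) ^ k * (Rabs C * D) ^ (n - k))
    by (rewrite <- pow_add; f_equal; lia).
  field; lra.
Qed.

Lemma Lam_head_le (n : nat) :
  Rabs (sum_f_R0 (fun k => u k * (C * L) ^ (n - k) * INR (fact k)
                             / (INR (fact (n - k)) * INR (fact n))) n)
  <= M * bessel_term ((g + 1) * Rabs C * D) n.
Proof.
  eapply Rle_trans; [apply sum_f_R0_triangle|].
  replace ((g + 1) * Rabs C * D) with ((g + 1) * (Rabs C * D)) by ring.
  rewrite bessel_term_mul_l, (Rmult_comm ((g + 1) ^ n)), <- Rmult_assoc.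
  rewrite binomial, scal_sum.
  apply sum_Rle; intros k Hk; now apply Lam_head_term_le.
Qed.

Lemma Lam_tail_term_le (n k : nat) :
  Rabs (v k * C ^ n * L ^ (n + k) * INR (fact k) / (INR (fact (n + k)) * INR (fact n)))
  <= M * bessel_term ((g + 1) * Rabs C * D) n * bessel_term (g * Rabs C * D ^ 2) k.
Proof.
  pose proof (dominated_nonneg _ _ _ Hv) as HM.
  pose proof (INR_fact_lt_0 k); pose proof (INR_fact_lt_0 n).
  pose proof (INR_fact_lt_0 (n + k)).
  set (c := INR (fact k) / (INR (fact (n + k)) * INR (fact n))).
  assert (Hc : 0 <= c <= / INR (fact n) ^ 2).
  { assert (Hfact : INR (fact n) * INR (fact k) <= INR (fact (n + k))).
    { rewrite <- mult_INR; apply le_INR, fact_mul_le_fact_add. }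
    unfold c; split; [apply Rlt_le, Rdiv_lt_0_compat; nra|].
    replace (/ INR (fact n) ^ 2)
      with (INR (fact k) / (INR (fact n) * INR (fact k) * INR (fact n))) by (field; lra).
    unfold Rdiv; apply Rmult_le_compat_l; [lra|].
    apply Rinv_le_contravar; [apply Rmult_lt_0_compat; nra|].
    apply Rmult_le_compat_r; lra. }
  assert (HCLk : Rabs (C ^ n * L ^ (n + k)) <= (Rabs C * D) ^ n * D ^ k).
  { replace (C ^ n * L ^ (n + k)) with ((C * L) ^ n * L ^ k)
      by (rewrite pow_add, Rpow_mult_distr; ring).
    rewrite Rabs_mult; apply Rmult_le_compat; try apply Rabs_pos.
    - exact (Rabs_pow_le _ _ _ HCL).
    - apply Rabs_pow_le; rewrite Rabs_pos_eq; lra. }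
  replace (v k * C ^ n * L ^ (n + k) * INR (fact k) / (INR (fact (n + k)) * INR (fact n)))
    with (v k * (C ^ n * L ^ (n + k)) * c) by (unfold c, Rdiv; ring).
  rewrite 2!Rabs_mult, (Rabs_pos_eq c) by lra.
  apply Rle_trans with (M * bessel_term (g * Rabs C * D) k * ((Rabs C * D) ^ n * D ^ k)
                          * / INR (fact n) ^ 2).
  { apply Rmult_le_compat; [apply Rmult_le_pos; apply Rabs_pos | apply Hc | | apply Hc].
    apply Rmult_le_compat; [apply Rabs_pos | apply Rabs_pos | apply Hv | exact HCLk]. }
  apply Rle_trans with (M * bessel_term (Rabs C * D) n * bessel_term (g * Rabs C * D ^ 2) k).
  { right; unfold bessel_term; rewrite !Rpow_mult_distr, <- pow_mult.
    replace (2 * k)%nat with (k + k)%nat by lia; rewrite pow_add; field; lra. }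
  apply Rmult_le_compat_r.
  - apply bessel_term_ge0, Rmult_le_pos; [apply Rmult_le_pos, Rabs_pos | apply pow2_ge_0]; lra.
  - apply Rmult_le_compat_l; [lra|].
    replace ((g + 1) * Rabs C * D) with ((g + 1) * (Rabs C * D)) by ring.
    apply bessel_term_le_mul_l; [lra|].
    apply Rmult_le_pos; [apply Rabs_pos | lra].
Qed.

Lemma Lam_comp_dominated :
  dominated (Series (bessel_term (g * Rabs C * D ^ 2)) * M) ((g + 1) * Rabs C * D)
            (Lam_comp C L u v).
Proof.
  intros n; unfold Lam_comp.
  set (t := g * Rabs C * D ^ 2).
  set (B := M * bessel_term ((g + 1) * Rabs C * D) n).
  assert (Ht : 0 <= t).
  { unfold t; apply Rmult_le_pos; [apply Rmult_le_pos; [lra | apply Rabs_pos] | apply pow2_ge_0]. }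
  pose proof (ex_series_bessel_term t Ht) as Hex.
  assert (Htail : Rabs (Series (fun j => let k := S j in
                    v k * C ^ n * L ^ (n + k) * INR (fact k)
                      / (INR (fact (n + k)) * INR (fact n))))
                  <= B * (Series (bessel_term t) - 1)).
  { eapply Rle_trans.
    { apply Rabs_Series_le with (h := fun j => B * bessel_term t (S j)).
      - intros j; apply Lam_tail_term_le.
      - apply (ex_series_scal_l (V := R_NormedModule)).
        exact (proj1 (ex_series_incr_1 (V := R_NormedModule) _) Hex). }
    right; rewrite Series_scal_l, (Series_incr_1 _ Hex), bessel_term_0; ring. }
  eapply Rle_trans; [apply Rabs_triang|].
  apply Rle_trans with (B + B * (Series (bessel_term t) - 1)).
  - apply Rplus_le_compat; [exact (Lam_head_le n) | exact Htail].
  - right; unfold B; ring.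
Qed.

End LambdaBound.

Theorem mainTheorem3 (a b c d C : R) (gamma : nat) (p q : nat -> R) :
  a < b -> c < d -> C <> 0 -> (1 <= gamma)%nat ->
  is_finite (gnorm gamma C (Rmax (b - a) (d - c)) p q) ->
  Rbar_le
    (gnorm (S gamma) C (Rmax (b - a) (d - c)) (Lam_p C c d p q) (Lam_q C a b p q))
    (Rbar_mult (I0 (2 * sqrt (INR gamma * Rabs C) * Rmax (b - a) (d - c)))
               (gnorm gamma C (Rmax (b - a) (d - c)) p q)).
Proof.
  intros Hab Hcd HC Hgamma Hfin.
  set (D := Rmax (b - a) (d - c)) in *.
  assert (Hba : 0 < b - a <= D) by (split; [lra | apply Rmax_l]).
  assert (Hdc : 0 < d - c <= D) by (split; [lra | apply Rmax_r]).
  assert (Hg : 1 <= INR gamma) by (apply (le_INR 1); exact Hgamma).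
  pose proof (Rabs_pos_lt C HC) as HCpos.
  assert (Hr : 0 < INR gamma * Rabs C * D) by (apply Rmult_lt_0_compat; nra).
  rewrite <- Hfin; set (M := real (gnorm gamma C D p q)).
  assert (HM : Rbar_le (gnorm gamma C D p q) (Finite M))
    by (unfold M; rewrite Hfin; apply Rbar_le_refl).
  destruct (proj1 (gnorm_le_dominated gamma C D M p q Hr) HM) as [Hp Hq].
  replace (2 * sqrt (INR gamma * Rabs C) * D) with (2 * (sqrt (INR gamma * Rabs C) * D)) by ring.
  rewrite I0_bessel_term, Rpow_mult_distr, pow2_sqrt by nra.
  simpl Rbar_mult.
  apply gnorm_le_dominated; rewrite S_INR; [nra|].
  split; apply Lam_comp_dominated; assumption || lra.
Qed.
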